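(* Consider the protocol \textsf{Contagion} (described in the context) run on top of an instance $pcb$ of probabilistic consistent broadcast. If $pcb$ satisfies $\epsilon_v^{pcb}$-total validity, then \textsf{Contagion} satisfies $\epsilon_v$-validity with $$\epsilon_v\le \epsilon_v^{pcb}+\left(1-\epsilon_v^{pcb}\right)\epsilon_o,\qquad \epsilon_o=\sum_{\bar F=D-\hat D+1}^{D}\binom{D}{\bar F}f^{\bar F}(1-f)^{D-\bar F}.$$
   Context: System model: a fixed set $\Pi$ of $N$ processes, a fraction $f$ of which are Byzantine (arbitrary behaviour, controlled by a single colluding static adversary that also controls message scheduling), and $C=(1-f)N$ correct. The system is asynchronous with reliable authenticated point-to-point links (messages between correct processes are eventually delivered). Signatures cannot be forged. Each correct process has a private independent unbiased randomness source and an oracle returning uniformly random processes of $\Pi$. A designated sender $\sigma$ broadcasts one message. Probabilistic consistent broadcast ($pcb$): $\sigma$ may broadcast a message; correct processes deliver at most one message; if $\sigma$ is correct, delivered messages were broadcast by $\sigma$; $pcb$ satisfies $\epsilon$-total validity if, whenever $\sigma$ is correct and broadcasts $m$, with probability at least $1-\epsilon$ every correct process eventually delivers $m$. \textsf{Contagion} (parameters: ready sample size $R$, contagion threshold $\hat R$, delivery sample size $D$, delivery threshold $\hat D$): upon initialization each correct process draws a ready sample of $R$ processes and a delivery sample of $D$ processes, each entry drawn independently and uniformly from $\Pi$ (with replacement), and sends ReadySubscribe to each; it records the processes from which it receives ReadySubscribe in a subscription set (and sends to each new subscriber a Ready message for every pair it is already ready for). To broadcast $m$, $\sigma$ broadcasts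 $(m,\mathrm{sign}_\sigma(m))$ via $pcb$. Upon $pcb$-delivering a correctly signed pair, a correct process becomes ready for it and sends Ready for that pair to all its subscribers. Correct processes accept Ready messages only with a valid signature of $\sigma$, and record them separately for senders in their ready sample and in their delivery sample. When at least $\hat R$ members of its ready sample have sent Ready for a pair, a correct process becomes ready for it and sends Ready for it to its subscribers (a process may be ready for several pairs). A correct process delivers the message of the first pair for which at least $\hat D$ members of its delivery sample have sent Ready, and delivers at most once. $\epsilon$-validity: if $\sigma$ is correct and broadcasts $m$, then $\sigma$ eventually delivers $m$ with probability at least $1-\epsilon$. *)

From HB Require Import structures.
From mathcomp Require Import all_boot all_order all_algebra.
From mathcomp Require Import all_classical all_reals all_analysis.
Import Order.TTheory GRing.Theory Num.Theory.

(* Signatures of the sender sigma are symbolic: a pair (m', s) is correctly  *)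
(* signed iff s = Some m'.  Unforgeability: Byzantine processes can only     *)
(* emit correctly signed pairs for the message m actually broadcast by the   *)
(* (correct) sender.                                                          *)
(* Protocol messages: None = ReadySubscribe, Some x = Ready x.               *)

Definition spair (Msg : eqType) : eqType := (Msg * option Msg)%type.
Definition sign {Msg : eqType} (mm : Msg) : option Msg := Some mm.
Definition valid_pair {Msg : eqType} (x : spair Msg) : bool := x.2 == Some x.1.
Definition cmsg (Msg : eqType) : eqType := option (spair Msg).

(* the random samples of every process: (ready sample, delivery sample),   *)
(* each entry drawn independently uniformly from Pi, with replacement       *)
Definition samples_t (N R D : nat) : finType :=
  {ffun 'I_N -> {ffun 'I_R -> 'I_N} * {ffun 'I_D -> 'I_N}}.

Record pstate (N : nat) (Msg : eqType) := PState {
  subs : seq 'I_N;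
  readyfor : seq (spair Msg);
  got : seq ('I_N * spair Msg);       (* accepted Ready messages (sender, pair) *)
  pcbd : bool;
  dlv : option Msg }.

Record gstate (N : nat) (Msg : eqType) := GState {
  procs : 'I_N -> pstate N Msg;
  pending : seq ('I_N * 'I_N * cmsg Msg) }.  (* in-transit (src, dst, msg) *)

(* adversary-scheduled events *)
Inductive cevent (N : nat) (Msg : eqType) :=
| EDeliver of 'I_N & 'I_N & cmsg Msg  (* network delivers pending msg src->dst *)
| EByz of 'I_N & 'I_N & cmsg Msg      (* Byzantine src sends msg to correct dst *)
| EPcb of 'I_N & spair Msg            (* pcb delivers a pair at a process *)
| ENop.
Arguments ENop {N Msg}.
Arguments EDeliver {N Msg}.
Arguments EByz {N Msg}.
Arguments EPcb {N Msg}.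
Arguments PState {N Msg}.
Arguments GState {N Msg}.
Arguments subs {N Msg}.
Arguments readyfor {N Msg}.
Arguments got {N Msg}.
Arguments pcbd {N Msg}.
Arguments dlv {N Msg}.
Arguments procs {N Msg}.
Arguments pending {N Msg}.

Section Contagion.
Variables (N R D Rh Dh : nat) (Msg : eqType) (Byz : {set 'I_N}) (m : Msg)
  (s : samples_t N R D).

Local Notation pst := (pstate N Msg).
Local Notation msgs := (seq ('I_N * 'I_N * cmsg Msg)).

Definition init_pstate : pst := PState [::] [::] [::] false None.

(* messages to Byzantine processes are handed to the adversary (dropped) *)
Definition send_to (p : 'I_N) (dsts : seq 'I_N) (c : cmsg Msg) : msgs :=
  [seq (p, q, c) | q <- dsts & q \notin Byz].

Definition countR (p : 'I_N) (st : pst) (x : spair Msg) : nat :=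
  #|[set i : 'I_R | ((s p).1 i, x) \in got st]|.
Definition countD (p : 'I_N) (st : pst) (x : spair Msg) : nat :=
  #|[set i : 'I_D | ((s p).2 i, x) \in got st]|.

Definition become_ready (p : 'I_N) (st : pst) (x : spair Msg) : pst * msgs :=
  if x \in readyfor st then (st, [::])
  else (PState (subs st) (x :: readyfor st) (got st) (pcbd st) (dlv st),
        send_to p (subs st) (Some x)).

(* correct process p receives c from q *)
Definition recv (p q : 'I_N) (c : cmsg Msg) (st : pst) : pst * msgs :=
  match c with
  | None =>
      if q \in subs st then (st, [::])
      else (PState (q :: subs st) (readyfor st) (got st) (pcbd st) (dlv st),
            [seq (p, q, Some x) | x <- readyfor st & q \notin Byz])
  | Some x =>
      if ~~ valid_pair x then (st, [::]) else
      let st1 := PState (subs st) (readyfor st) ((q, x) :: got st)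
                        (pcbd st) (dlv st) in
      let r := if Rh <= countR p st1 x then become_ready p st1 x
               else (st1, [::]) in
      let st2 := r.1 in
      let st3 := if (dlv st2 == None) && (Dh <= countD p st2 x)
                 then PState (subs st2) (readyfor st2) (got st2) (pcbd st2)
                             (Some x.1)
                 else st2 in
      (st3, r.2)
  end.

Definition pcb_deliver (p : 'I_N) (x : spair Msg) (st : pst) : pst * msgs :=
  let st1 := PState (subs st) (readyfor st) (got st) true (dlv st) in
  if valid_pair x then become_ready p st1 x else (st1, [::]).

Definition upd (f : 'I_N -> pst) (b : 'I_N) (v : pst) : 'I_N -> pst :=
  fun q => if q == b then v else f q.

Definition init_state : gstate N Msg :=
  GState (fun _ => init_pstate)
    (flatten [seq send_to p ([seq (s p).1 i | i <- enum 'I_R]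
                              ++ [seq (s p).2 i | i <- enum 'I_D]) None
             | p <- enum 'I_N & p \notin Byz]).

Definition legal (st : gstate N Msg) (e : cevent N Msg) : bool :=
  match e with
  | EDeliver a b c => (a, b, c) \in pending st
  | EByz a b c =>
      [&& a \in Byz, b \notin Byz &
          match c with Some x => valid_pair x ==> (x.1 == m) | None => true end]
  | EPcb p x => [&& p \notin Byz, ~~ pcbd (procs st p) & x == (m, sign m)]
  | ENop => true
  end.

Definition step (st : gstate N Msg) (e : cevent N Msg) : gstate N Msg :=
  match e with
  | EDeliver a b c =>
      let r := recv b a c (procs st b) in
      GState (upd (procs st) b r.1) (rem (a, b, c) (pending st) ++ r.2)
  | EByz a b c =>
      let r := recv b a c (procs st b) in
      GState (upd (procs st) b r.1) (pending st ++ r.2)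
  | EPcb p x =>
      let r := pcb_deliver p x (procs st p) in
      GState (upd (procs st) p r.1) (pending st ++ r.2)
  | ENop => st
  end.

Fixpoint state_at (e : nat -> cevent N Msg) (n : nat) : gstate N Msg :=
  match n with 0 => init_state | n'.+1 => step (state_at e n') (e n') end.

(* an admissible (legal, fair) execution: reliable links *)
Definition admissible (e : nat -> cevent N Msg) : Prop :=
  (forall n, legal (state_at e n) (e n)) /\
  (forall n k, k \in pending (state_at e n) ->
     exists2 n', n <= n' & e n' = EDeliver k.1.1 k.1.2 k.2).

(* pcb total validity event: every correct process eventually pcb-delivers m *)
Definition pcb_all (e : nat -> cevent N Msg) : Prop :=
  forall p, p \notin Byz -> exists n, e n = EPcb p (m, sign m).

Definition delivers (e : nat -> cevent N Msg) (p : 'I_N) (mm : Msg) : Prop :=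
  exists n, dlv (procs (state_at e n) p) = Some mm.

End Contagion.

(* probability of an event over (uniform samples) x (pcb randomness, law P) *)
Definition joint_prob (Rr : realType) (d : measure_display)
  (Omega : measurableType d) (P : probability Omega Rr) (T : finType)
  (E : T -> set Omega) : \bar Rr :=
  (((#|T|%:R : Rr)^-1)%:E * \sum_(t : T) P (E t))%E.

Definition eps_o (Rr : realType) (f : Rr) (D Dh : nat) : Rr :=
  (\sum_(D - Dh + 1 <= Fb < D.+1) 'C(D, Fb)%:R * f ^+ Fb * (1 - f) ^+ (D - Fb))%R.

(** If pcb delivers (m, sign m) to every correct process, then every correct
    process becomes ready for it, and since the sender's signature cannot be
    forged no process is ever ready for, or delivers, anything else.  Every
    correct member q of sigma's delivery sample received sigma's
    ReadySubscribe, so by reliable links q's Ready eventually reaches sigma;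
    hence sigma delivers m as soon as at least Dh entries of its delivery
    sample are correct.  That event depends on the samples only: the number
    of Byzantine entries among the D uniform draws is binomial with
    parameters D and f, so it exceeds D - Dh with probability eps_o.
    Averaging over the samples, sigma delivers with probability at least
    (1 - eps_pcb) (1 - eps_o). *)

From HB Require Import structures.
From mathcomp Require Import all_boot all_order all_algebra.
From mathcomp Require Import all_classical all_reals all_analysis.
Import Order.TTheory GRing.Theory Num.Theory.
From mathcomp Require Import ring zify.

Set Implicit Arguments.
Unset Strict Implicit.
Unset Printing Implicit Defensive.

Section Hits.
Variables (T : finType) (B : {set T}) (D : nat).

Lemma card_ffun_preimset (S : {set 'I_D}) :
  #|[set b : {ffun 'I_D -> T} | [set i | b i \in B] == S]| =
  (#|B| ^ #|S| * #|~: B| ^ (D - #|S|))%N.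
Proof.
pose C i : {set T} := if i \in S then B else ~: B.
have -> : #|[set b : {ffun 'I_D -> T} | [set i | b i \in B] == S]| =
          #|(family C : simpl_pred {ffun 'I_D -> T})|.
  apply: eq_card => b; rewrite inE; apply/eqP/familyP => [hS i | bC].
    by rewrite /C -hS inE; case: ifP => [//|/negbT]; rewrite inE.
  apply/setP => i; have := bC i; rewrite /C !inE.
  by case: (i \in S); rewrite ?inE => // /negPf.
rewrite card_family foldrE big_map big_enum /= (bigID (mem S)) /=.
rewrite (eq_bigr (fun=> #|B|)) => [|i iS]; last by rewrite /C iS.
rewrite [X in (_ * X)%N](eq_bigr (fun=> #|~: B|)) => [|i /negPf iS]; last first.
  by rewrite /C iS.
rewrite !prod_nat_const.
rewrite [X in #|~: B| ^ X](@eq_card _ _ (~: S)) => [|i]; last by rewrite inE.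
by rewrite [#|~: S|]cardsCs finset.setCK card_ord.
Qed.

Lemma card_ffun_hits k :
  #|[set b : {ffun 'I_D -> T} | #|[set i | b i \in B]| == k]| =
  ('C(D, k) * (#|B| ^ k * #|~: B| ^ (D - k)))%N.
Proof.
pose pre (b : {ffun 'I_D -> T}) := [set i | b i \in B].
rewrite -sum1dep_card (partition_big pre (fun S => #|S| == k)) => [|b /eqP <-] //=.
rewrite (eq_bigr (fun S : {set 'I_D} => #|B| ^ k * #|~: B| ^ (D - k)))%N.
  rewrite sum_nat_const -[D in 'C(D, _)]card_ord -card_draws.
  by congr (_ * _); apply: eq_card => A; rewrite inE.
move=> S /eqP <-; rewrite sum1dep_card -card_ffun_preimset; apply: eq_card => b.
by rewrite !inE andb_idl // => /eqP <-.
Qed.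

Lemma sum_ffun_hits (V : nmodType) (F : nat -> V) :
  (\sum_(b : {ffun 'I_D -> T}) F #|[set i | b i \in B]|)%R =
  (\sum_(k < D.+1) F k *+ ('C(D, k) * (#|B| ^ k * #|~: B| ^ (D - k))))%R.
Proof.
have hitsD (b : {ffun 'I_D -> T}) : #|[set i | b i \in B]| < D.+1.
  by rewrite ltnS -[X in _ <= X](card_ord D) max_card.
rewrite (partition_big (fun b => Ordinal (hitsD b)) xpredT) //=.
apply: eq_bigr => k _; rewrite -card_ffun_hits -sumr_const.
apply: eq_big => [b | b /eqP <-] //; rewrite inE.
by apply/eqP/eqP => [<- | hk] //; apply: val_inj.
Qed.

End Hits.

Section Averages.
Local Open Scope ring_scope.

Definition avg (R : numFieldType) (T : finType) (g : T -> R) : R :=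
  #|T|%:R^-1 * \sum_(x : T) g x.

Lemma sum_ffun_app (R : comPzSemiRingType) (I T : finType) (i0 : I) (g : T -> R) :
  \sum_(t : {ffun I -> T}) g (t i0) = #|T|%:R ^+ #|I|.-1 * \sum_(x : T) g x.
Proof.
pose G i x := if i == i0 then g x else 1.
transitivity (\sum_(t : {ffun I -> T}) \prod_(i : I) G i (t i)).
  apply: eq_bigr => t _; rewrite (bigD1 i0) //= /G eqxx big1 ?mulr1 // => i.
  by move/negPf ->.
rewrite -bigA_distr_bigA (bigD1 i0) //= /G eqxx mulrC; congr (_ * _).
rewrite (eq_bigr (fun=> #|T|%:R)) => [|i /negPf ->]; last first.
  by rewrite sumr_const.
by rewrite prodr_const cardC1.
Qed.

Lemma avg_ffun_app (R : numFieldType) (I T : finType) (i0 : I) (g : T -> R) :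
  (0 < #|T|)%N -> avg (fun t : {ffun I -> T} => g (t i0)) = avg g.
Proof.
move=> T0; have I0 : (0 < #|I|)%N by apply/card_gt0P; exists i0.
have T0' : #|T|%:R != 0 :> R by rewrite pnatr_eq0 -lt0n.
rewrite /avg sum_ffun_app card_ffun natrX -[in #|T|%:R ^+ #|I|](prednK I0) exprS.
by field; rewrite T0' expf_neq0.
Qed.

Lemma avg_snd (R : numFieldType) (A B : finType) (g : B -> R) :
  (0 < #|A|)%N -> avg (fun u : A * B => g u.2) = avg g.
Proof.
move=> A0; have A0' : #|A|%:R != 0 :> R by rewrite pnatr_eq0 -lt0n.
rewrite /avg; have -> : \sum_(u : A * B) g u.2 = #|A|%:R * \sum_(y : B) g y.
  by rewrite -(pair_big xpredT xpredT (fun=> g)) /= sumr_const mulr_natl.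
by rewrite card_prod natrM invfM -mulrA mulrCA mulKf.
Qed.

Lemma avg_ffun_hits (R : numFieldType) (T : finType) (B : {set T}) (D : nat)
    (F : nat -> R) : (0 < #|T|)%N ->
  avg (fun b : {ffun 'I_D -> T} => F #|[set i | b i \in B]|) =
  \sum_(k < D.+1) F k * ('C(D, k)%:R * (#|B|%:R / #|T|%:R) ^+ k
                                    * (1 - #|B|%:R / #|T|%:R) ^+ (D - k)).
Proof.
move=> T0; have T0' : #|T|%:R != 0 :> R by rewrite pnatr_eq0 -lt0n.
have compl : 1 - #|B|%:R / #|T|%:R = #|~: B|%:R / #|T|%:R :> R.
  by move: T0'; rewrite -(cardsC B) natrD => T0'; field.
rewrite /avg sum_ffun_hits card_ffun card_ord mulr_sumr; apply: eq_bigr => k _.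
have kD : (k <= D)%N by rewrite -ltnS.
rewrite compl !expr_div_n -[F k *+ _]mulr_natr !natrM !natrX.
rewrite -[in #|T|%:R ^+ D](subnKC kD) exprD.
by field; rewrite !expf_neq0.
Qed.

Lemma onem_eps_o (R : realType) (f : R) (D Dh : nat) : (Dh <= D)%N ->
  1 - eps_o R f D Dh =
  \sum_(0 <= k < D - Dh + 1) 'C(D, k)%:R * f ^+ k * (1 - f) ^+ (D - k).
Proof.
move=> DhD; have cut : (D - Dh + 1 <= D.+1)%N by rewrite addn1 ltnS leq_subr.
have binomial : 1 = \sum_(0 <= k < D.+1) 'C(D, k)%:R * f ^+ k * (1 - f) ^+ (D - k).
  have := exprDn (1 - f) f D; rewrite subrK expr1n => binomialE; rewrite [LHS]binomialE.
  by rewrite big_mkord; apply: eq_bigr => k _; rewrite -mulr_natl; ring.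
by rewrite [in LHS]binomial (big_cat_nat (leq0n _) cut) /= /eps_o addrK.
Qed.

Lemma avg_correct_quorum (R : realType) (N D Dh : nat) (Byz : {set 'I_N}) (f : R) :
  (0 < N)%N -> (Dh <= D)%N -> f * N%:R = #|Byz|%:R ->
  avg (fun b : {ffun 'I_D -> 'I_N} => (Dh <= #|[set i | b i \notin Byz]|)%:R) =
  1 - eps_o R f D Dh.
Proof.
move=> N0 DhD hf.
have correctE (b : {ffun 'I_D -> 'I_N}) :
    #|[set i | b i \notin Byz]| = (D - #|[set i | b i \in Byz]|)%N.
  have -> : [set i | b i \notin Byz] = ~: [set i | b i \in Byz].
    by apply/setP => i; rewrite !inE.
  by rewrite cardsCs finset.setCK card_ord.
have -> : (fun b : {ffun 'I_D -> 'I_N} => ((Dh <= #|[set i | b i \notin Byz]|)%N)%:R)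
          = (fun b => ((Dh <= D - #|[set i | b i \in Byz]|)%N)%:R :> R).
  by apply/funext => b; rewrite correctE.
have pE : #|Byz|%:R / N%:R = f.
  by rewrite -hf mulfK // pnatr_eq0 -lt0n.
rewrite (@avg_ffun_hits _ _ Byz D (fun k => ((Dh <= D - k)%N)%:R)) ?card_ord //.
rewrite pE onem_eps_o // (big_nat_widen 0 _ D.+1).
  rewrite big_mkord [RHS]big_mkcond /=; apply: eq_bigr => k _.
  have kD : (k <= D)%N by rewrite -ltnS.
  have -> : (Dh <= D - k)%N = (k < D - Dh + 1)%N by lia.
  by case: ifP; rewrite ?mul1r ?mul0r.
by rewrite addn1 ltnS leq_subr.
Qed.

Lemma avgMl (R : numFieldType) (T : finType) (c : R) (g : T -> R) :
  avg (fun x => c * g x) = c * avg g.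
Proof. by rewrite /avg -mulr_sumr mulrCA. Qed.

Lemma joint_prob_ge_avg (R : realType) d (Omega : measurableType d)
    (P : probability Omega R) (T : finType) (E : T -> set Omega) (g : T -> R) :
  (forall t, (g t)%:E <= P (E t))%E -> ((avg g)%:E <= joint_prob R d Omega P T E)%E.
Proof.
move=> g_le; rewrite /joint_prob /avg EFinM -sumEFin.
by apply: lee_wpmul2l; [rewrite lee_fin invr_ge0 ler0n | exact: lee_sum].
Qed.

End Averages.

Section Protocol.
Variables (N R D Rh Dh : nat) (Msg : eqType) (Byz : {set 'I_N}) (m : Msg)
  (s : samples_t N R D).

Local Notation pst := (pstate N Msg).
Local Notation gst := (gstate N Msg).
Local Notation send_to := (send_to N Msg Byz).
Local Notation become_ready := (become_ready N Msg Byz).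
Local Notation recv := (recv N R D Rh Dh Msg Byz s).
Local Notation pcb_deliver := (pcb_deliver N Msg Byz).
Local Notation countD := (countD N R D Msg s).
Local Notation upd := (upd N Msg).

Definition pstate_le (a b : pst) : Prop :=
  [/\ {subset subs a <= subs b}, {subset readyfor a <= readyfor b},
      {subset got a <= got b} & (dlv a != None -> dlv b = dlv a)].

Lemma pstate_le_refl a : pstate_le a a.
Proof. by split. Qed.

Lemma pstate_le_trans a b c : pstate_le a b -> pstate_le b c -> pstate_le a c.
Proof.
case=> ab1 ab2 ab3 ab4 [bc1 bc2 bc3 bc4]; split.
- by move=> y /ab1 /bc1.
- by move=> y /ab2 /bc2.
- by move=> y /ab3 /bc3.
by move=> a_dlv; rewrite bc4 ab4 ?a_dlv.
Qed.

Lemma become_ready_cases p st x :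
  (x \in readyfor st /\ become_ready p st x = (st, [::])) \/
  (x \notin readyfor st /\ become_ready p st x =
    (PState (subs st) (x :: readyfor st) (got st) (pcbd st) (dlv st),
     send_to p (subs st) (Some x))).
Proof.
by rewrite /become_ready; case: ifP => x_rdy; [left | right; split => //; apply/negbT].
Qed.

Lemma countD_got p a b y : got a = got b -> countD p a y = countD p b y.
Proof. by rewrite /countD => ->. Qed.

Lemma recv_valid_cases p q x st : valid_pair x ->
  let r := recv p q (Some x) st in
  let st1 := PState (subs st) (readyfor st) ((q, x) :: got st) (pcbd st) (dlv st) in
  [/\ subs r.1 = subs st, got r.1 = (q, x) :: got st,
      (readyfor r.1 = readyfor st /\ r.2 = [::]) \/
      [/\ x \notin readyfor st, readyfor r.1 = x :: readyfor st &
          r.2 = send_to p (subs st) (Some x)] &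
      dlv r.1 = if (dlv st == None) && (Dh <= countD p st1 x) then Some x.1
                else dlv st].
Proof.
move=> x_val r st1; rewrite /r /recv x_val /= -/st1.
set r2 := (if Rh <= _ then _ else _).
have [r2_subs r2_got r2_rdy r2_dlv] :
    [/\ subs r2.1 = subs st, got r2.1 = (q, x) :: got st,
      (readyfor r2.1 = readyfor st /\ r2.2 = [::]) \/
      [/\ x \notin readyfor st, readyfor r2.1 = x :: readyfor st &
          r2.2 = send_to p (subs st) (Some x)] &
      dlv r2.1 = dlv st].
  rewrite /r2; case: (Rh <= _); last by split => //; left.
  by case: (become_ready_cases p st1 x) => [[_ ->] | [x_new ->]];
    split => //; [left | right].
rewrite (@countD_got p _ st1 x r2_got) r2_dlv.
by case: ifP => _ /=; split.
Qed.

Lemma recv_le p q c st : pstate_le st (recv p q c st).1.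
Proof.
case: c => [x|]; last first.
  by rewrite /recv; case: ifP => _ /=; split => //= y y_sub; rewrite inE y_sub orbT.
case x_val: (valid_pair x); last by rewrite /recv x_val; exact: pstate_le_refl.
have [r_subs r_got r_rdy r_dlv] := recv_valid_cases p q st x_val.
split => [y | y | y | st_dlv]; first by rewrite r_subs.
- by case: r_rdy => [[->] | [_ -> _]] // y_rdy; rewrite inE y_rdy orbT.
- by rewrite r_got inE => ->; rewrite orbT.
rewrite r_dlv; case: ifP => // /andP[/eqP no_dlv _].
by rewrite no_dlv in st_dlv.
Qed.

Lemma recv_readyfor p q c st y : y \in readyfor (recv p q c st).1 ->
  y \in readyfor st \/ (c = Some y /\ valid_pair y).
Proof.
case: c => [x|]; last by rewrite /recv; case: ifP => //= _ ->; left.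
case x_val: (valid_pair x); last by rewrite /recv x_val /= => ->; left.
have [_ _ [[-> _] | [_ -> _]] _] := recv_valid_cases p q st x_val; first by left.
by rewrite inE => /orP[/eqP -> | ->]; [right | left].
Qed.

Lemma recv_out p q c st a b c' : (a, b, c') \in (recv p q c st).2 ->
  exists2 y, c' = Some y & y \in readyfor (recv p q c st).1.
Proof.
case: c => [x|]; last first.
  rewrite /recv; case: ifP => //= _.
  by case/mapP => y; rewrite mem_filter => /andP[_ y_rdy] [_ _ ->]; exists y.
case x_val: (valid_pair x); last by rewrite /recv x_val.
have [_ _ [[_ ->] | [_ -> ->]] _] // := recv_valid_cases p q st x_val.
by case/mapP => y _ [_ _ ->]; exists x; rewrite ?inE ?eqxx.
Qed.

Lemma recv_new_ready_sent p q c st r y : r \notin Byz ->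
  y \in readyfor (recv p q c st).1 -> r \in subs (recv p q c st).1 ->
  (y \in readyfor st /\ r \in subs st) \/ (p, r, Some y) \in (recv p q c st).2.
Proof.
move=> r_cor; case: c => [x|]; last first.
  rewrite /recv; case: ifP => /= _; first by left.
  move=> y_rdy; rewrite inE => /orP[/eqP r_q | r_sub]; last by left.
  rewrite r_q in r_cor *.
  by right; apply/mapP; exists y; rewrite // mem_filter r_cor.
case x_val: (valid_pair x); last by rewrite /recv x_val /=; left.
have [-> _ [[-> _] | [_ -> ->]] _] := recv_valid_cases p q st x_val.
  by left.
rewrite inE => /orP[/eqP -> | y_rdy] r_sub; last by left.
by right; apply/mapP; exists r; rewrite // mem_filter r_cor.
Qed.

Lemma recv_dlv p q c st : dlv (recv p q c st).1 = dlv st \/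
  exists2 x, c = Some x /\ valid_pair x & dlv (recv p q c st).1 = Some x.1.
Proof.
case: c => [x|]; last by rewrite /recv; case: ifP => /= _; left.
case x_val: (valid_pair x); last by rewrite /recv x_val /=; left.
have [_ _ _ ->] := recv_valid_cases p q st x_val.
by case: ifP => _; [right; exists x | left].
Qed.

Lemma recv_got p q x st : valid_pair x -> (q, x) \in got (recv p q (Some x) st).1.
Proof.
by move=> x_val; have [_ -> _ _] := recv_valid_cases p q st x_val; rewrite inE eqxx.
Qed.

Lemma recv_subs p q st : q \in subs (recv p q None st).1.
Proof. by rewrite /recv; case: ifP => //= _; rewrite inE eqxx. Qed.

Lemma recv_quorum_dlv p q c st :
  (forall y, Dh <= countD p st y -> dlv st != None) ->
  forall y, Dh <= countD p (recv p q c st).1 y -> dlv (recv p q c st).1 != None.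
Proof.
move=> st_quorum y.
case: c => [x|]; last first.
  rewrite /recv; case: ifP => /= _; first exact: st_quorum.
  by rewrite (@countD_got p _ st) //; apply: st_quorum.
case x_val: (valid_pair x); last by rewrite /recv x_val /=; apply: st_quorum.
have [_ r_got _ ->] := recv_valid_cases p q st x_val.
case: ifP => [// | /negbT]; rewrite negb_and => /orP[// | x_below] y_quorum.
apply: st_quorum; have y_neq_x : y != x.
  apply: contraNneq x_below => y_eq_x; move: y_quorum; rewrite y_eq_x.
  by rewrite (countD_got _ _ (b := PState (subs st) (readyfor st) ((q, x) :: got st)
                                          (pcbd st) (dlv st))).
move: y_quorum; rewrite /countD r_got; congr (_ <= _); apply: eq_card => i.
by rewrite !inE /= xpair_eqE (negbTE y_neq_x) andbF.
Qed.

Lemma pcb_deliver_cases p x st :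
  let r := pcb_deliver p x st in
  [/\ subs r.1 = subs st, got r.1 = got st, dlv r.1 = dlv st,
      (valid_pair x -> x \in readyfor r.1) &
      (readyfor r.1 = readyfor st /\ r.2 = [::]) \/
      [/\ x \notin readyfor st, readyfor r.1 = x :: readyfor st &
          r.2 = send_to p (subs st) (Some x)]].
Proof.
rewrite /pcb_deliver; set st1 := PState _ _ _ _ _.
case: ifP => x_val; last by split => //; left.
case: (become_ready_cases p st1 x) => [[x_rdy ->] | [x_new ->]] /=.
  by split => //; left.
by split => //; [rewrite inE eqxx | right].
Qed.

Lemma pcb_deliver_le p x st : pstate_le st (pcb_deliver p x st).1.
Proof.
have [r_subs r_got r_dlv _ r_rdy] := pcb_deliver_cases p x st.
split => [y | y | y | _]; rewrite ?r_subs ?r_got ?r_dlv //.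
by case: r_rdy => [[->] | [_ -> _]] // y_rdy; rewrite inE y_rdy orbT.
Qed.

Lemma pcb_deliver_readyfor p x st y : y \in readyfor (pcb_deliver p x st).1 ->
  y \in readyfor st \/ y = x.
Proof.
have [_ _ _ _ [[-> _] | [_ -> _]]] := pcb_deliver_cases p x st; first by left.
by rewrite inE => /orP[/eqP -> | ->]; [right | left].
Qed.

Lemma pcb_deliver_out p x st a b c' : (a, b, c') \in (pcb_deliver p x st).2 ->
  exists2 y, c' = Some y & y \in readyfor (pcb_deliver p x st).1.
Proof.
have [_ _ _ _ [[_ ->] | [_ -> ->]]] // := pcb_deliver_cases p x st.
by case/mapP => y _ [_ _ ->]; exists x; rewrite ?inE ?eqxx.
Qed.

Lemma pcb_deliver_new_ready_sent p x st r y : r \notin Byz ->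
  y \in readyfor (pcb_deliver p x st).1 -> r \in subs (pcb_deliver p x st).1 ->
  (y \in readyfor st /\ r \in subs st) \/ (p, r, Some y) \in (pcb_deliver p x st).2.
Proof.
move=> r_cor.
have [-> _ _ _ [[-> _] | [_ -> ->]]] := pcb_deliver_cases p x st; first by left.
rewrite inE => /orP[/eqP -> | y_rdy] r_sub; last by left.
by right; apply/mapP; exists r; rewrite // mem_filter r_cor.
Qed.


Definition signed_m : spair Msg := (m, sign m).

Lemma signed_m_valid : valid_pair signed_m.
Proof. exact: eqxx. Qed.

Lemma valid_pair_signed_m y : valid_pair y -> y.1 = m -> y = signed_m.
Proof. by case: y => y1 y2 /eqP /= -> ->. Qed.

Definition ready_relayed (g : gst) : Prop :=
  forall q r y, q \notin Byz -> r \notin Byz -> y \in readyfor (procs g q) ->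
    r \in subs (procs g q) ->
    (q, r, Some y) \in pending g \/ (q, y) \in got (procs g r).

Record safe (g : gst) : Prop := Safe {
  ready_signed_m : forall p y, y \in readyfor (procs g p) -> y = signed_m;
  pending_signed_m : forall a b y, (a, b, Some y) \in pending g -> y = signed_m;
  dlv_m : forall p z, dlv (procs g p) = Some z -> z = m;
  quorum_dlv : forall p y, Dh <= countD p (procs g p) y -> dlv (procs g p) != None;
  relayed : ready_relayed g }.

Lemma ready_relayed_update g g' :
  (forall z, pstate_le (procs g z) (procs g' z)) ->
  (forall q r y, (q, r, Some y) \in pending g ->
     (q, r, Some y) \in pending g' \/ (q, y) \in got (procs g' r)) ->
  (forall q r y, r \notin Byz -> y \in readyfor (procs g' q) ->
     r \in subs (procs g' q) ->
     (y \in readyfor (procs g q) /\ r \in subs (procs g q)) \/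
     (q, r, Some y) \in pending g') ->
  ready_relayed g -> ready_relayed g'.
Proof.
move=> g_le pending_kept new_sent g_rel q r y q_cor r_cor y_rdy r_sub.
have [[y_rdy0 r_sub0] | ] := new_sent q r y r_cor y_rdy r_sub; last by left.
have [/pending_kept // | y_got] := g_rel q r y q_cor r_cor y_rdy0 r_sub0.
by right; have [_ _ /(_ _ y_got)] := g_le r.
Qed.

Lemma upd_le (pr : 'I_N -> pst) b v z :
  pstate_le (pr b) v -> pstate_le (pr z) (upd pr b v z).
Proof. by rewrite /upd; case: eqP => [-> // | _ _]; exact: pstate_le_refl. Qed.

Lemma safe_recv g a b c P' : safe g ->
  (forall y, c = Some y -> valid_pair y -> y = signed_m) ->
  {subset P' <= pending g} ->
  (forall k, k \in pending g -> k \in P' \/ k = (a, b, c)) ->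
  let r := recv b a c (procs g b) in
  safe (GState (upd (procs g) b r.1) (P' ++ r.2)).
Proof.
move=> [g_rdy g_pend g_dlv g_quorum g_rel] c_signed P'_sub P'_cover r.
have rdy' z y : y \in readyfor (upd (procs g) b r.1 z) -> y = signed_m.
  rewrite /upd; case: eqP => _; last exact: g_rdy.
  by case/recv_readyfor => [/g_rdy // | [/c_signed]].
split => /=.
- exact: rdy'.
- move=> a' b' y; rewrite mem_cat => /orP[/P'_sub/g_pend // | /recv_out[_ [<-]]].
  by move: (rdy' b y); rewrite /upd eqxx.
- move=> p z; rewrite /upd; case: eqP => _; last exact: g_dlv.
  have [-> | [x [c_x x_val] ->] [<-]] := recv_dlv b a c (procs g b); first exact: g_dlv.
  by rewrite (c_signed x c_x x_val).
- move=> p y; rewrite /upd; case: eqP => [-> | _]; last exact: g_quorum.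
  by apply: recv_quorum_dlv; exact: g_quorum.
apply: ready_relayed_update g_rel => /= [z | q r' y | q r' y r'_cor].
- by apply: upd_le; exact: recv_le.
- move=> k_pend; have [k_P' | [-> -> c_y]] := P'_cover _ k_pend.
    by left; rewrite mem_cat k_P'.
  right; rewrite /upd eqxx /r -c_y; apply: recv_got.
  by rewrite (g_pend _ _ _ k_pend) signed_m_valid.
rewrite /upd; case: eqP => [-> y_rdy r'_sub | _]; last by left.
have [ | r_out] := recv_new_ready_sent r'_cor y_rdy r'_sub; first by left.
by right; rewrite mem_cat r_out orbT.
Qed.

Lemma safe_pcb g p : safe g ->
  let r := pcb_deliver p signed_m (procs g p) in
  safe (GState (upd (procs g) p r.1) (pending g ++ r.2)).
Proof.
move=> [g_rdy g_pend g_dlv g_quorum g_rel] r.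
have [r_subs r_got r_dlv _ _] := pcb_deliver_cases p signed_m (procs g p).
have rdy' z y : y \in readyfor (upd (procs g) p r.1 z) -> y = signed_m.
  rewrite /upd; case: eqP => _; last exact: g_rdy.
  by case/pcb_deliver_readyfor => [/g_rdy | ].
split => /=.
- exact: rdy'.
- move=> a b y; rewrite mem_cat => /orP[/g_pend // | /pcb_deliver_out[_ [<-]]].
  by move: (rdy' p y); rewrite /upd eqxx.
- by move=> z w; rewrite /upd; case: eqP => _; rewrite ?r_dlv; exact: g_dlv.
- move=> z y; rewrite /upd; case: eqP => [-> | _]; last exact: g_quorum.
  by rewrite r_dlv (countD_got _ _ r_got); exact: g_quorum.
apply: ready_relayed_update g_rel => /= [z | q r' y k_pend | q r' y r'_cor].
- by apply: upd_le; exact: pcb_deliver_le.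
- by left; rewrite mem_cat k_pend.
rewrite /upd; case: eqP => [-> y_rdy r'_sub | _]; last by left.
have [ | r_out] := pcb_deliver_new_ready_sent r'_cor y_rdy r'_sub; first by left.
by right; rewrite mem_cat r_out orbT.
Qed.

Local Notation init_state := (init_state N R D Msg Byz s).
Local Notation step := (step N R D Rh Dh Msg Byz s).
Local Notation legal := (legal N Msg Byz m).
Local Notation state_at := (state_at N R D Rh Dh Msg Byz s).
Local Notation admissible := (admissible N R D Rh Dh Msg Byz m s).
Local Notation pcb_all := (pcb_all N Msg Byz m).

Lemma safe_init : 0 < Dh -> safe init_state.
Proof.
move=> Dh_gt0; split => //=.
- by move=> a b y /flattenP[_ /mapP[p _ ->]] /mapP[q _ []].
- move=> p y; rewrite /countD /=.
  suff -> : [set i | ((s p).2 i, y) \in [::]] = finset.set0.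
    by rewrite cards0 leqNgt Dh_gt0.
  by apply/setP => i; rewrite !inE.
Qed.

Lemma safe_step g e : safe g -> legal g e -> safe (step g e).
Proof.
move=> g_safe; case: e => [a b c | a b c | p x | ] //= e_legal.
- apply: safe_recv => //.
  + by move=> y c_y _; rewrite c_y in e_legal; exact: pending_signed_m e_legal.
  + by move=> k /mem_rem.
  + move=> k k_pend; have [-> | k_neq] := eqVneq k (a, b, c); first by right.
    by left; exact: rem_mem.
- apply: safe_recv => //; last by move=> k; left.
  move=> y c_y y_val; apply: (valid_pair_signed_m y_val).
  by move: e_legal; rewrite c_y => /and3P[_ _ /implyP/(_ y_val)/eqP].
- by case/and3P: e_legal => _ _ /eqP ->; exact: safe_pcb.
Qed.

Lemma safe_state_at e : 0 < Dh -> (forall n, legal (state_at e n) (e n)) ->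
  forall n, safe (state_at e n).
Proof.
move=> Dh_gt0 e_legal; elim=> [| n IHn] /=; first exact: safe_init.
exact: safe_step.
Qed.

Lemma step_le g e p : pstate_le (procs g p) (procs (step g e) p).
Proof.
case: e => [a b c | a b c | q x | ] /=; last exact: pstate_le_refl.
- by apply: upd_le; exact: recv_le.
- by apply: upd_le; exact: recv_le.
by apply: upd_le; exact: pcb_deliver_le.
Qed.

Lemma state_at_le e n n' p : n <= n' ->
  pstate_le (procs (state_at e n) p) (procs (state_at e n') p).
Proof.
move/subnK => <-; elim: (n' - n) => [| k IHk]; first exact: pstate_le_refl.
by rewrite addSn; apply: pstate_le_trans IHk _; exact: step_le.
Qed.

Local Open Scope classical_set_scope.

Lemma eventually_state e p (Q : pst -> Prop) :
  (forall a b, pstate_le a b -> Q a -> Q b) ->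
  (exists n, Q (procs (state_at e n) p)) ->
  \forall n \near \oo, Q (procs (state_at e n) p).
Proof.
move=> Q_mono [n0 Q_n0]; exists n0 => // n /= n0_n.
exact: Q_mono (state_at_le e p n0_n) Q_n0.
Qed.

Lemma init_subscribe_pending p i : p \notin Byz -> (s p).2 i \notin Byz ->
  (p, (s p).2 i, None) \in pending init_state.
Proof.
move=> p_cor q_cor; apply/flattenP.
exists (send_to p ([seq (s p).1 j | j <- enum 'I_R] ++
                   [seq (s p).2 j | j <- enum 'I_D]) None).
  by apply: map_f; rewrite mem_filter p_cor mem_enum.
apply/mapP; exists ((s p).2 i) => //.
by rewrite mem_filter q_cor mem_cat map_f ?orbT ?mem_enum.
Qed.

Section Execution.
Variable e : nat -> cevent N Msg.
Hypotheses (Dh_gt0 : 0 < Dh) (e_adm : admissible e) (e_pcb : pcb_all e).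

Let e_safe n : safe (state_at e n) := safe_state_at Dh_gt0 e_adm.1 n.

Lemma subscribed_eventually p i : p \notin Byz -> (s p).2 i \notin Byz ->
  \forall n \near \oo, p \in subs (procs (state_at e n) ((s p).2 i)).
Proof.
move=> p_cor q_cor.
apply: (eventually_state (Q := fun st => p \in subs st)).
  by move=> a b [sub_le _ _ _]; exact: sub_le.
have [n _ e_n] := e_adm.2 0 (p, (s p).2 i, None) (init_subscribe_pending p_cor q_cor).
by exists n.+1; rewrite /= e_n /= /upd eqxx; exact: recv_subs.
Qed.

Lemma ready_eventually q : q \notin Byz ->
  \forall n \near \oo, signed_m \in readyfor (procs (state_at e n) q).
Proof.
move=> q_cor.
apply: (eventually_state (Q := fun st => signed_m \in readyfor st)).
  by move=> a b [_ rdy_le _ _]; exact: rdy_le.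
have [n e_n] := e_pcb q_cor; exists n.+1; rewrite /= e_n /= /upd eqxx.
have [_ _ _ m_rdy _] := pcb_deliver_cases q signed_m (procs (state_at e n) q).
exact: m_rdy signed_m_valid.
Qed.

Lemma ready_received_eventually p i : p \notin Byz -> (s p).2 i \notin Byz ->
  \forall n \near \oo, ((s p).2 i, signed_m) \in got (procs (state_at e n) p).
Proof.
move=> p_cor q_cor.
apply: (eventually_state (Q := fun st => ((s p).2 i, signed_m) \in got st)).
  by move=> a b [_ _ got_le _]; exact: got_le.
have [n [p_sub m_rdy]] := filter_ex
  (filterI (subscribed_eventually p_cor q_cor) (ready_eventually q_cor)).
have [m_pend | ] := relayed (e_safe n) q_cor p_cor m_rdy p_sub; last by exists n.
have [n' _ e_n'] := e_adm.2 n _ m_pend.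
by exists n'.+1; rewrite /= e_n' /= /upd eqxx; apply: recv_got; exact: signed_m_valid.
Qed.

Lemma delivers_of_correct_quorum p : p \notin Byz ->
  Dh <= #|[set i | (s p).2 i \notin Byz]%SET| -> delivers N R D Rh Dh Msg Byz s e p m.
Proof.
move=> p_cor p_quorum.
have all_got : \forall n \near \oo, forall i, (s p).2 i \notin Byz ->
    ((s p).2 i, signed_m) \in got (procs (state_at e n) p).
  apply: filter_forall => i; have [q_cor | q_byz] := boolP ((s p).2 i \notin Byz).
    by apply: filterS (ready_received_eventually p_cor q_cor) => n.
  by apply: nearW => n /negP.
have [n got_n] := filter_ex all_got.
have [_ _ dlv_n quorum_n _] := e_safe n.
have : Dh <= countD p (procs (state_at e n) p) signed_m.
  apply: leq_trans p_quorum (subset_leq_card _).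
  by apply/fintype.subsetP => i; rewrite !inE; exact: got_n.
move/quorum_n; case dlv_eq: dlv => [z|] // _.
by exists n; rewrite dlv_eq (dlv_n _ _ dlv_eq).
Qed.

End Execution.
End Protocol.

Local Open Scope classical_set_scope.
Local Open Scope ring_scope.

Theorem theorem12 (Rr : realType) (d : measure_display) (Omega : measurableType d)
  (P : probability Omega Rr)
  (N R D Rh Dh : nat) (Msg : eqType) (Byz : {set 'I_N}) (sigma : 'I_N) (m : Msg)
  (f eps_pcb : Rr)
  (run : samples_t N R D -> Omega -> nat -> cevent N Msg) :
  (0 < Dh <= D)%N ->
  f * N%:R = #|Byz|%:R ->
  sigma \notin Byz ->
  (forall s w, admissible N R D Rh Dh Msg Byz m s (run s w)) ->
  (forall s, measurable [set w | pcb_all N Msg Byz m (run s w)] /\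
             ((1 - eps_pcb)%:E <= P [set w | pcb_all N Msg Byz m (run s w)])%E) ->
  (forall s, measurable [set w | delivers N R D Rh Dh Msg Byz s (run s w) sigma m]) ->
  ((1 - (eps_pcb + (1 - eps_pcb) * eps_o Rr f D Dh))%:E
     <= joint_prob Rr d Omega P (samples_t N R D) (fun s => [set w | delivers N R D Rh Dh Msg Byz s (run s w) sigma m]))%E.
Proof.
move=> /andP[Dh_gt0 DhD] f_Byz sigma_cor run_adm run_pcb run_meas.
have N_gt0 : (0 < N)%N by apply: leq_ltn_trans (ltn_ord sigma).
pose good (b : {ffun 'I_D -> 'I_N}) : Rr :=
  ((Dh <= #|[set i | b i \notin Byz]%SET|)%N)%:R.
have delivers_good (t : samples_t N R D) :
    (((1 - eps_pcb) * good (t sigma).2)%:E <=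
     P [set w | delivers N R D Rh Dh Msg Byz t (run t w) sigma m])%E.
  rewrite /good; case: leqP => quorum; last by rewrite mulr0 measure_ge0.
  rewrite mulr1; apply: le_trans (run_pcb t).2 _.
  apply: le_measure; rewrite ?inE; [exact: (run_pcb t).1 | exact: run_meas |].
  by move=> w /= pcb_w; exact: delivers_of_correct_quorum.
have -> : 1 - (eps_pcb + (1 - eps_pcb) * eps_o Rr f D Dh) =
          (1 - eps_pcb) * (1 - eps_o Rr f D Dh) by ring.
apply: le_trans (joint_prob_ge_avg delivers_good).
have ffun_gt0 n : (0 < #|{ffun 'I_n -> 'I_N}|)%N.
  by rewrite card_ffun card_ord expn_gt0 N_gt0.
rewrite avgMl (avg_ffun_app sigma (fun u => good u.2)) ?card_prod ?muln_gt0 ?ffun_gt0 //.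
by rewrite avg_snd ?ffun_gt0 // /good (avg_correct_quorum N_gt0 DhD f_Byz).
Qed.
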